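(* Let $\lambda\in\mathbb{C}$ and let $u,v:\mathbb{Z}^2\to\mathbb{C}$ satisfy, for all $(l,m)\in\mathbb{Z}^2$ (with all denominators nonzero), \[ \widetilde{\overline u}-u-\frac1{\widetilde u}+\frac1{\overline u}=0,\qquad u-\widetilde{\overline v}-\frac1{\overline u}+\frac{\lambda}{\widetilde v}=0, \] \[ (u-v)\Big(\frac1u+\widetilde v\Big)-1+\lambda=0,\qquad \frac1u-\frac{\lambda}{v}-\overline u+\overline v=0. \] Then $v$ satisfies, for all $(l,m)\in\mathbb{Z}^2$, \[ \big(v\,\overline v-\widetilde v\,\widetilde{\overline v}\big)^2+\big(v-\widetilde{\overline v}\big)\big(\overline v-\widetilde v\big)\big(\lambda-v\,\overline v\big)\big(\lambda-\widetilde v\,\widetilde{\overline v}\big)=0. \]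
   Context: Shift notation: for $f:\mathbb{Z}^2\to\mathbb{C}$, $f=f_{l,m}$, $\overline f=f_{l+1,m}$, $\widetilde f=f_{l,m+1}$, $\widetilde{\overline f}=f_{l+1,m+1}$. *)

From mathcomp Require Import all_boot all_order all_algebra.
From mathcomp Require Import all_classical all_reals.
From mathcomp Require Export complex.
Set Implicit Arguments. Unset Strict Implicit. Unset Printing Implicit Defensive.
Import GRing.Theory Num.Theory.
Local Open Scope ring_scope.
Local Open Scope complex_scope.

Definition lattice_fun (R : realType) := int -> int -> R[i].

From mathcomp Require Import all_boot all_order all_algebra.
From mathcomp Require Import all_classical all_reals.
From mathcomp Require Import complex.
From mathcomp Require Import ring.
Import GRing.Theory Num.Theory.
Local Open Scope ring_scope.
Local Open Scope complex_scope.

(* The claimed equation for v is obtained by eliminating u from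
   the equations E2, E3, E4 at a single lattice point.
   Writing x = u and ub = u(l+1,m):
   - E3 says that x is a root of the quadratic  vt x^2 + (lam - v vt) x - v;
   - E4 gives ub in terms of x, E2 gives 1/ub in terms of x, and multiplying
     them out (ub * ub^-1 = 1) shows that x is a root of a second quadratic
     A vt x^2 + A B x + B v, with A = v vb - lam and B = lam - vt vbt.
   Two quadratics with a common nonzero root have vanishing resultant; this
   is a ring identity (Lemma quadratic_resultant), and the resultant of the
   two quadratics above is v^2 vt^2 times the left-hand side of the claimed
   equation (Lemma resultant_lattice_quadratics). *)

Definition resultant2 {R : comPzRingType} (f0 f1 f2 g0 g1 g2 : R) : R :=
  (f2 * g0 - g2 * f0) ^+ 2 - (f2 * g1 - g2 * f1) * (f1 * g0 - g1 * f0).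

(* A common root x of two quadratics annihilates x^2 times their resultant:
   x^2 * resultant2 is a polynomial combination of the two quadratics. *)
Lemma quadratic_resultant {R : comPzRingType} {f0 f1 f2 g0 g1 g2 x : R} :
  f2 * x ^+ 2 + f1 * x + f0 = 0 -> g2 * x ^+ 2 + g1 * x + g0 = 0 ->
  x ^+ 2 * resultant2 f0 f1 f2 g0 g1 g2 = 0.
Proof.
move=> hf hg.
pose Q := f2 * g0 - g2 * f0; pose S := f1 * g0 - g1 * f0.
have -> : x ^+ 2 * resultant2 f0 f1 f2 g0 g1 g2
    = Q * (g0 * (f2 * x ^+ 2 + f1 * x + f0) - f0 * (g2 * x ^+ 2 + g1 * x + g0))
      - x * S * (f2 * (g2 * x ^+ 2 + g1 * x + g0)
                 - g2 * (f2 * x ^+ 2 + f1 * x + f0)).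
  by rewrite /resultant2 /Q /S; ring.
by rewrite hf hg !(mulr0, subr0).
Qed.

Lemma common_root_resultant {R : idomainType} {f0 f1 f2 g0 g1 g2 x : R} :
  x != 0 ->
  f2 * x ^+ 2 + f1 * x + f0 = 0 -> g2 * x ^+ 2 + g1 * x + g0 = 0 ->
  resultant2 f0 f1 f2 g0 g1 g2 = 0.
Proof.
move=> hx hf hg; apply/eqP.
have /eqP := quadratic_resultant hf hg.
by rewrite mulf_eq0 expf_eq0 (negbTE hx) andbF.
Qed.

Section LatticePoint.
(* The values at one elementary square of the lattice: x = u, ub = u bar,
   v0 = v, vb = v bar, vt = v tilde, vbt = v tilde-bar. *)
Context {F : fieldType} {lam x ub v0 vb vt vbt : F}.

Let A : F := v0 * vb - lam.
Let B : F := lam - vt * vbt.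

Lemma resultant_lattice_quadratics :
  resultant2 (- v0) (lam - v0 * vt) vt (B * v0) (A * B) (A * vt)
  = v0 ^+ 2 * vt ^+ 2 *
    ((v0 * vb - vt * vbt) ^+ 2
     + (v0 - vbt) * (vb - vt) * (lam - v0 * vb) * (lam - vt * vbt)).
Proof. by rewrite /resultant2 /A /B; ring. Qed.

Hypotheses (hx : x != 0) (hub : ub != 0) (hv0 : v0 != 0) (hvt : vt != 0).

Lemma E3_quadratic :
  (x - v0) * (x^-1 + vt) - 1 + lam = 0 ->
  vt * x ^+ 2 + (lam - v0 * vt) * x + - v0 = 0.
Proof.
move=> e3.
have -> : vt * x ^+ 2 + (lam - v0 * vt) * x + - v0
    = x * ((x - v0) * (x^-1 + vt) - 1 + lam) by field.
by rewrite e3 mulr0.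
Qed.

(* E4 expresses ub and E2 expresses ub^-1 through x; their product being 1
   is a second quadratic equation for x. *)
Lemma E2_E4_quadratic :
  x - vbt - ub^-1 + lam / vt = 0 ->
  x^-1 - lam / v0 - ub + vb = 0 ->
  (A * vt) * x ^+ 2 + (A * B) * x + B * v0 = 0.
Proof.
move=> e2 e4.
have ub_def : ub = x^-1 - lam / v0 + vb.
  by apply/esym/subr0_eq; rewrite -e4; ring.
have ubV_def : ub^-1 = x - vbt + lam / vt.
  by apply/esym/subr0_eq; rewrite -e2; ring.
have -> : (A * vt) * x ^+ 2 + (A * B) * x + B * v0
    = v0 * vt * x * ((x^-1 - lam / v0 + vb) * (x - vbt + lam / vt) - 1).
  by rewrite /A /B; field; rewrite hvt hv0 hx.
by rewrite -ub_def -ubV_def mulfV // subrr mulr0.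
Qed.

Lemma lattice_point_equation :
  x - vbt - ub^-1 + lam / vt = 0 ->
  (x - v0) * (x^-1 + vt) - 1 + lam = 0 ->
  x^-1 - lam / v0 - ub + vb = 0 ->
  (v0 * vb - vt * vbt) ^+ 2
  + (v0 - vbt) * (vb - vt) * (lam - v0 * vb) * (lam - vt * vbt) = 0.
Proof.
move=> e2 e3 e4.
have := common_root_resultant hx (E3_quadratic e3) (E2_E4_quadratic e2 e4).
move/eqP; rewrite resultant_lattice_quadratics !mulf_eq0.
by rewrite (negbTE hv0) (negbTE hvt) /= => /eqP.
Qed.

End LatticePoint.

Theorem mainTheorem4 (R : realType) (lam : R[i]) (u v : int -> int -> R[i])
  (hu : forall l m, u l m != 0) (hv : forall l m, v l m != 0)
  (E1 : forall l m,
     u (l + 1) (m + 1) - u l m - (u l (m + 1))^-1 + (u (l + 1) m)^-1 = 0)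
  (E2 : forall l m,
     u l m - v (l + 1) (m + 1) - (u (l + 1) m)^-1 + lam / v l (m + 1) = 0)
  (E3 : forall l m,
     (u l m - v l m) * ((u l m)^-1 + v l (m + 1)) - 1 + lam = 0)
  (E4 : forall l m,
     (u l m)^-1 - lam / v l m - u (l + 1) m + v (l + 1) m = 0) :
  forall l m,
    (v l m * v (l + 1) m - v l (m + 1) * v (l + 1) (m + 1)) ^+ 2
    + (v l m - v (l + 1) (m + 1)) * (v (l + 1) m - v l (m + 1))
      * (lam - v l m * v (l + 1) m) * (lam - v l (m + 1) * v (l + 1) (m + 1)) = 0.
Proof.
move=> l m.
exact: (lattice_point_equation (hu l m) (hu (l + 1) m) (hv l m) (hv l (m + 1))
          (E2 l m) (E3 l m) (E4 l m)).
Qed.
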